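(* Let $(\Omega,\mathcal{F},(\mathcal{F}_t)_{t\ge 0},\mathbb{P})$ be a filtered probability space, let $n\ge 1$, and for each $k\in\{1,\dots,n\}$ let $(B^{(k)}_t)_{t\ge 0}$ be a standard $(\mathcal{F}_t)$-Brownian motion (adapted to $(\mathcal{F}_t)$, with $B^{(k)}_{t+s}-B^{(k)}_t$ independent of $\mathcal{F}_t$ for all $s,t\ge 0$), let $a_k,\sigma_k\in\mathbb{R}$, and set $X^{*(k)}_t=\sigma_k tB^{(k)}_t + a_k t$ (so $X^{*(k)}_0=0$ and $X^{*(k)}_t$ is $\mathcal{F}_t$-measurable). Let $c_1,\dots,c_n\in\mathbb{R}$ be arbitrary constants and put $S_t=\sum_{k=1}^n c_k X^{*(k)}_t$. Then for every $t>0$ with $S_t\neq 0$ and every $s\ge 0$, $$E(S_{t+s}-S_t\mid\mathcal{F}_t)=\frac{s}{t}S_t\quad\text{a.s.},$$ i.e. $(S_t)_{t>0}$ is a process with proportional increments.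
   Context: A process $(N_t)_{t>0}$ adapted to a filtration $(\mathcal{F}_t)$ has proportional increments if for all $t>0$ with $N_t\neq 0$ and all $s\ge 0$: $E(N_{t+s}-N_t\mid\mathcal{F}_t)=\frac{s}{t}N_t$ almost surely. *)

From HB Require Import structures.
From mathcomp Require Import all_boot all_order all_algebra.
From mathcomp Require Import all_classical all_reals all_analysis.
Set Implicit Arguments. Unset Strict Implicit. Unset Printing Implicit Defensive.
Import Order.TTheory GRing.Theory Num.Theory.
Import numFieldNormedType.Exports.
Local Open Scope classical_set_scope.
Local Open Scope ring_scope.

Definition filtration d (T : measurableType d) (R : realType)
    (F : R -> set (set T)) : Prop :=
  (forall t, 0 <= t -> sigma_algebra setT (F t)) /\
  (forall t, 0 <= t -> F t `<=` measurable) /\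
  (forall s t, 0 <= s -> s <= t -> F s `<=` F t).

Definition measurable_wrt d (T : measurableType d) (R : realType)
    (G : set (set T)) (X : T -> R) : Prop :=
  forall B : set R, measurable B -> G (X @^-1` B).

Definition indep_of d (T : measurableType d) (R : realType)
    (P : probability T R) (G : set (set T)) (X : T -> R) : Prop :=
  forall A B, G A -> measurable B ->
    P (A `&` X @^-1` B) = (P A * P (X @^-1` B))%E.

Definition brownian_motion d (T : measurableType d) (R : realType)
    (P : probability T R) (F : R -> set (set T)) (B : R -> T -> R) : Prop :=
  (forall w, B 0 w = 0) /\
  (forall w, {within `[0, +oo[, continuous (fun t => B t w)}) /\
  (forall t, 0 <= t -> measurable_wrt (F t) (B t)) /\
  (forall t s, 0 <= t -> 0 <= s -> indep_of P (F t) (fun w => B (t + s) w - B t w)) /\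
  (forall t s, 0 <= t -> 0 < s -> forall A : set R, measurable A ->
     P ((fun w => B (t + s) w - B t w) @^-1` A) = normal_prob 0 (Num.sqrt s) A).

Definition cond_exp_version d (T : measurableType d) (R : realType)
    (P : probability T R) (G : set (set T)) (X Y : T -> R) : Prop :=
  P.-integrable setT (EFin \o X) /\
  measurable_wrt G Y /\
  P.-integrable setT (EFin \o Y) /\
  (forall A, G A -> (\int[P]_(w in A) (Y w)%:E = \int[P]_(w in A) (X w)%:E)%E).

Definition proportional_increments d (T : measurableType d) (R : realType)
    (P : probability T R) (F : R -> set (set T)) (N : R -> T -> R) : Prop :=
  forall t s, 0 < t -> N t <> (fun _ => 0) -> 0 <= s ->
    cond_exp_version P (F t) (fun w => N (t + s) w - N t w)
      (fun w => s / t * N t w).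

(* For t > 0 the increment splits as
     S_{t+s} - S_t = (s/t) S_t + (t+s) sum_k c_k sigma_k (B^k_{t+s} - B^k_t).
   The first term is F_t-measurable and integrable, so it suffices that every
   Brownian increment Z, a centred Gaussian independent of F_t, integrates to
   0 over each A in F_t. Independence makes the law of Z restricted to A
   (patched by 0 outside A) symmetric, so that integral equals its own
   opposite. Integrability of Gaussians comes from the bound
   |x| phi_sg(x) <= C phi_(2 sg)(x) on the normal densities. *)

From HB Require Import structures.
From mathcomp Require Import all_boot all_order all_algebra.
From mathcomp Require Import all_classical all_reals all_analysis measurable_realfun.
From mathcomp Require Import lra ring.
Set Implicit Arguments. Unset Strict Implicit. Unset Printing Implicit Defensive.
Import Order.TTheory GRing.Theory Num.Theory.
Import numFieldNormedType.Exports.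
Local Open Scope classical_set_scope.
Local Open Scope ring_scope.

Section normal_first_moment.
Context {R : realType}.

Lemma normr_mul_expR_le (k x : R) : 0 < k ->
  `|x| * expR (- (k * x ^+ 2)) <= 1 + k^-1.
Proof.
move=> k0.
have x_le : `|x| <= 1 + x ^+ 2 by rewrite -(real_normK (num_real x)); nra.
have sqr_le : 1 + x ^+ 2 <= (1 + k^-1) * (1 + k * x ^+ 2).
  have -> : (1 + k^-1) * (1 + k * x ^+ 2) = 1 + x ^+ 2 + k^-1 + k * x ^+ 2.
    by field; rewrite gt_eqF.
  have : 0 <= k^-1 by rewrite invr_ge0 ltW.
  have : 0 <= k * x ^+ 2 by rewrite mulr_ge0 ?sqr_ge0 // ltW.
  lra.
have exp_ge : (1 + k^-1) * (1 + k * x ^+ 2) <= (1 + k^-1) * expR (k * x ^+ 2).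
  apply: ler_wpM2l; last exact: expR_ge1Dx.
  by rewrite addr_ge0 // invr_ge0 ltW.
rewrite -ler_pdivlMr ?expR_gt0 // expRN invrK.
exact: le_trans x_le (le_trans sqr_le exp_ge).
Qed.

Lemma normr_mul_normal_pdf_le (sg x : R) : sg != 0 ->
  `|x| * normal_pdf 0 sg x <=
  normal_peak sg / normal_peak (2 * sg) * (1 + 8 * sg ^+ 2 / 3) *
  normal_pdf 0 (2 * sg) x.
Proof.
move=> sg0; have sg20 : 2 * sg != 0 by rewrite mulf_neq0.
have sqr_gt0 : 0 < sg ^+ 2 by rewrite exprn_even_gt0.
rewrite /normal_pdf (negbTE sg0) (negbTE sg20) /normal_fun !subr0.
set k := 3 / (8 * sg ^+ 2).
have k0 : 0 < k by apply: divr_gt0; nra.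
have kV : k^-1 = 8 * sg ^+ 2 / 3 by rewrite invf_div.
have -> : expR (- x ^+ 2 / (sg ^+ 2 *+ 2)) =
    expR (- x ^+ 2 / ((2 * sg) ^+ 2 *+ 2)) * expR (- (k * x ^+ 2)).
  by rewrite -expRD /k; congr expR; field.
have peak2_gt0 : 0 < normal_peak (2 * sg) by exact: normal_peak_gt0.
rewrite -kV; set e := expR (- x ^+ 2 / _).
have -> : normal_peak sg / normal_peak (2 * sg) * (1 + k^-1) *
    (normal_peak (2 * sg) * e) = normal_peak sg * e * (1 + k^-1).
  by field; rewrite !gt_eqF.
have -> : `|x| * (normal_peak sg * (e * expR (- (k * x ^+ 2)))) =
    normal_peak sg * e * (`|x| * expR (- (k * x ^+ 2))) by ring.
apply: ler_wpM2l; first by rewrite mulr_ge0 ?normal_peak_ge0 ?expR_ge0.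
exact: normr_mul_expR_le.
Qed.

End normal_first_moment.

Section normal_prob_facts.
Context {R : realType}.
Local Open Scope ereal_scope.

Lemma ge0_integral_normal_prob (sg : R) (f : R -> \bar R) :
  (forall x, 0 <= f x) -> measurable_fun [set: R] f ->
  \int[normal_prob 0 sg]_x f x =
  \int[lebesgue_measure]_x (f x * (normal_pdf 0 sg x)%:E).
Proof.
move=> f0 mf.
have dom := @normal_prob_dominates R 0 sg.
rewrite -(Radon_Nikodym_SigmaFinite.change_of_variables dom) //.
apply: ae_eq_integral => //.
- apply: emeasurable_funM => //; apply: (measurable_int lebesgue_measure).
  exact: Radon_Nikodym_SigmaFinite.f_integrable.
- apply: emeasurable_funM => //=; apply/measurableT_comp => //=.
  exact: measurable_normal_pdf.
- apply: ae_eqe_mul2l => /=; apply: integral_ae_eq => //=.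
  + exact: Radon_Nikodym_SigmaFinite.f_integrable.
  + by apply/measurableT_comp => //; exact: measurable_normal_pdf.
  + by move=> E _ mE; rewrite -Radon_Nikodym_SigmaFinite.f_integral.
Qed.

Lemma normal_prob_integral_normr_lty (sg : R) : sg != 0%R ->
  \int[normal_prob 0 sg]_x `|x|%:E < +oo.
Proof.
move=> sg0; set K := (normal_peak sg / normal_peak (2 * sg) *
                      (1 + 8 * sg ^+ 2 / 3))%R.
have K0 : (0 <= K)%R.
  have sqr_ge0 := sqr_ge0 sg.
  by apply: mulr_ge0; [rewrite divr_ge0 ?normal_peak_ge0 | lra].
have mpdf2 : measurable_fun [set: R] (EFin \o normal_pdf 0 (2 * sg)).
  by apply/measurable_EFinP; exact: measurable_normal_pdf.
rewrite ge0_integral_normal_prob //; last first.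
  by apply/measurable_EFinP; exact: normr_measurable.
apply: (@le_lt_trans _ _
  (\int[lebesgue_measure]_x (K%:E * (normal_pdf 0 (2 * sg) x)%:E))).
  apply: ge0_le_integral => //.
  - by move=> x _; rewrite -EFinM lee_fin mulr_ge0 // normal_pdf_ge0.
  - apply: emeasurable_funM; apply/measurable_EFinP; first exact: normr_measurable.
    exact: measurable_normal_pdf.
  - by apply: emeasurable_funM.
  - by move=> x _; rewrite -!EFinM lee_fin normr_mul_normal_pdf_le.
rewrite ge0_integralZl //; first by rewrite integral_normal_pdf mule1 ltry.
by move=> x _; rewrite lee_fin normal_pdf_ge0.
Qed.

(* [normal_pdf 0 0] is the indicator of [[0, 1]], hence the hypothesis [sg != 0]. *)
Lemma normal_pdfN (sg x : R) : sg != 0%R ->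
  normal_pdf 0 sg (- x) = normal_pdf 0 sg x.
Proof. by move=> sg0; rewrite /normal_pdf (negbTE sg0) /normal_fun !subr0 sqrrN. Qed.

Lemma normal_probN (sg : R) (E : set R) : sg != 0%R -> measurable E ->
  normal_prob 0 sg (-%R @^-1` E) = normal_prob 0 sg E.
Proof.
move=> sg0 mE; rewrite /normal_prob.
transitivity (\int[lebesgue_measure]_(x in -%R @^-1` E)
    ((fun y => (normal_pdf 0 sg y)%:E) \o -%R) x).
  by apply: eq_integral => x _ /=; rewrite normal_pdfN.
transitivity (\int[pushforward lebesgue_measure (-%R : R -> measurableTypeR R)]_(y in E)
    (normal_pdf 0 sg y)%:E).
  rewrite ge0_integral_pushforward //=.
  - by apply/measurable_funTS/measurable_EFinP; exact: measurable_normal_pdf.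
  - by move=> y _; rewrite lee_fin normal_pdf_ge0.
by apply: eq_measure_integral => A mA _; exact: lebesgue_measureN.
Qed.

End normal_prob_facts.

Section normal_random_variable.
Context d (T : measurableType d) (R : realType) (P : probability T R).
Local Open Scope ereal_scope.

Lemma integral_EFin_pushforward (phi : T -> R) :
  measurable_fun setT phi -> P.-integrable setT (EFin \o phi) ->
  \int[P]_x (phi x)%:E =
  \int[pushforward P (phi : T -> measurableTypeR R)]_y y%:E.
Proof.
move=> mphi iphi.
by rewrite integral_pushforward //=; exact: measurable_EFinP.
Qed.

Lemma integrable_normal (Z : T -> R) (sg : R) : sg != 0%R ->
  measurable_fun setT Z ->
  (forall E : set R, measurable E -> P (Z @^-1` E) = normal_prob 0 sg E) ->
  P.-integrable setT (EFin \o Z).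
Proof.
move=> sg0 mZ lawZ; apply/integrableP; split; first exact/measurable_EFinP.
rewrite (_ : \int[P]_x `|(EFin \o Z) x| =
    \int[pushforward P (Z : T -> measurableTypeR R)]_y `|y|%:E); last first.
  rewrite ge0_integral_pushforward //=.
  by apply/measurable_EFinP; exact: normr_measurable.
rewrite (eq_measure_integral (normal_prob 0 sg)); last by move=> E mE _; exact: lawZ.
exact: normal_prob_integral_normr_lty.
Qed.

Lemma integral_eq0_of_symmetric_law (phi : T -> R) :
  measurable_fun setT phi -> P.-integrable setT (EFin \o phi) ->
  (forall E : set R, measurable E -> P (phi @^-1` (-%R @^-1` E)) = P (phi @^-1` E)) ->
  \int[P]_x (phi x)%:E = 0.
Proof.
move=> mphi iphi sym_phi.
have mphiN : measurable_fun setT (\- phi)%R by exact: measurable_funN.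
have iphiN : P.-integrable setT (EFin \o (\- phi)%R).
  by apply: eq_integrable (integrableN iphi).
have int_phiN : \int[P]_x (phi x)%:E = \int[P]_x (- phi x)%R%:E.
  rewrite (integral_EFin_pushforward mphi iphi).
  rewrite (integral_EFin_pushforward mphiN iphiN).
  by apply: eq_measure_integral => E mE _; exact/esym/sym_phi.
have : \int[P]_x (phi x)%:E = -1%:E * \int[P]_x (phi x)%:E.
  rewrite -integralZl //; rewrite [LHS]int_phiN.
  by apply: eq_integral => x _; rewrite -EFinM mulN1r.
have := integrable_fin_num measurableT iphi.
case: (\int[P]_x (phi x)%:E) => // r _; rewrite -EFinM => -[].
by rewrite mulN1r => rE; congr EFin; lra.
Qed.

Lemma integral_indep_normal_eq0 (Z : T -> R) (sg : R) (A : set T) :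
  sg != 0%R -> measurable A -> measurable_fun setT Z ->
  (forall E : set R, measurable E -> P (Z @^-1` E) = normal_prob 0 sg E) ->
  (forall E : set R, measurable E -> P (A `&` Z @^-1` E) = P A * P (Z @^-1` E)) ->
  \int[P]_(x in A) (Z x)%:E = 0.
Proof.
move=> sg0 mA mZ lawZ indepZ.
have mZE E : measurable E -> measurable (Z @^-1` E).
  by move=> mE; rewrite -[X in measurable X]setTI; exact: mZ.
have patchE : (EFin \o Z) \_ A = EFin \o (Z \_ A).
  by apply/funext => x; rewrite /patch /=; case: ifP.
have law_patch (E : set R) : measurable E -> P ((Z \_ A) @^-1` E) =
    P (if 0%R \in E then ~` A else set0) + P A * normal_prob 0 sg E.
  move=> mE; have -> : (Z \_ A) @^-1` E =
      (if 0%R \in E then ~` A else set0) `|` (A `&` Z @^-1` E).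
    exact: preimage_restrict.
  rewrite measureU //.
  - by congr (_ + _); rewrite -lawZ //; exact: indepZ.
  - by case: ifP => _; [exact: measurableC | exact: measurable0].
  - exact: measurableI mA (mZE _ mE).
  - by case: ifP => _; [rewrite setIA setICl set0I | rewrite set0I].
rewrite integral_mkcond patchE; apply: integral_eq0_of_symmetric_law.
- by apply/(measurable_restrictT _ mA)/measurable_funTS.
- rewrite -patchE -integrable_mkcond //.
  exact: integrableS (integrable_normal sg0 mZ lawZ).
- move=> E mE; have mNE : measurable (-%R @^-1` E).
    by rewrite -[X in measurable X]setTI; exact: oppr_measurable.
  have mem0N : (0%R \in -%R @^-1` E) = (0%R \in E).
    by apply/idP/idP; rewrite !in_setE /= oppr0.
  by rewrite !law_patch // normal_probN // mem0N.
Qed.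

End normal_random_variable.

Section real_valued_integrable.
Context d (T : measurableType d) (R : realType).
Local Open Scope ereal_scope.

Lemma integrableZl_EFin (mu : {measure set T -> \bar R}) (D : set T)
    (k : R) (f : T -> R) : measurable D ->
  mu.-integrable D (EFin \o f) -> mu.-integrable D (EFin \o (fun x => k * f x)%R).
Proof.
move=> mD f_int; apply: eq_integrable mD _ _ _ (integrableZl mD k f_int) => x _.
by rewrite /= EFinM.
Qed.

Lemma integrable_affine (mu : {finite_measure set T -> \bar R}) (a b : R)
    (f : T -> R) :
  mu.-integrable setT (EFin \o f) ->
  mu.-integrable setT (EFin \o (fun x => a * f x + b)%R).
Proof.
move=> /(integrableZl_EFin a measurableT) af_int.
apply: eq_integrable measurableT _ _ _
  (integrableD measurableT af_int (finite_measure_integrable_cst mu b measurableT)).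
by move=> x _; rewrite /= EFinD.
Qed.

Lemma integrable_sum_mulr (mu : {measure set T -> \bar R}) (D : set T) n
    (c : 'I_n -> R) (f : 'I_n -> T -> R) : measurable D ->
  (forall k, mu.-integrable D (EFin \o f k)) ->
  mu.-integrable D (EFin \o (fun x => \sum_(k < n) c k * f k x)%R).
Proof.
move=> mD f_int; apply: eq_integrable mD _ _ _ (integrable_sum mD _ (fun k _ =>
  integrableZl_EFin (c k) mD (f_int k))) => x _ /=.
by rewrite sumEFin.
Qed.

Lemma integral_sum_mulr (mu : {measure set T -> \bar R}) (D : set T) n
    (c : 'I_n -> R) (f : 'I_n -> T -> R) : measurable D ->
  (forall k, mu.-integrable D (EFin \o f k)) ->
  \int[mu]_(x in D) (\sum_(k < n) c k * f k x)%:E =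
  \sum_(k < n) (c k)%:E * \int[mu]_(x in D) (f k x)%:E.
Proof.
move=> mD f_int; under eq_integral do rewrite -sumEFin.
rewrite integral_sum //; last by move=> k; exact: integrableZl_EFin (f_int k).
by apply: eq_bigr => k _; rewrite -integralZl //; exact: f_int.
Qed.

End real_valued_integrable.

Section measurable_wrt_sigma_algebra.
Context d (T : measurableType d) (R : realType) (G : set (set T)).
Hypothesis G_sigma : sigma_algebra setT G.

Lemma measurable_wrtP (f : T -> R) :
  measurable_wrt G f <-> measurable_fun setT (f : g_sigma_algebraType G -> R).
Proof.
have GE := measurable_g_measurableTypeE G_sigma.
split => [f_meas _ Y mY | f_meas Y mY]; first by rewrite setTI GE; exact: f_meas.
by have := f_meas measurableT Y mY; rewrite setTI GE.
Qed.

Lemma measurable_wrt_sum_affine n (c a b : 'I_n -> R) (f : 'I_n -> T -> R) :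
  (forall k, measurable_wrt G (f k)) ->
  measurable_wrt G (fun x => \sum_(k < n) c k * (a k * f k x + b k)).
Proof.
move=> f_meas; apply/measurable_wrtP; apply: measurable_sum => k.
apply: measurable_funM => //; apply: measurable_funD => //.
by apply: measurable_funM => //; exact/measurable_wrtP.
Qed.

End measurable_wrt_sigma_algebra.

Lemma cond_exp_version_centered d (T : measurableType d) (R : realType)
    (P : probability T R) (G : set (set T)) (X Y D : T -> R) :
  G `<=` measurable -> measurable_wrt G Y ->
  P.-integrable setT (EFin \o Y) -> P.-integrable setT (EFin \o D) ->
  (forall A, G A -> (\int[P]_(x in A) (D x)%:E = 0)%E) ->
  (forall x, X x = Y x + D x) ->
  cond_exp_version P G X Y.
Proof.
move=> G_meas Y_meas Y_int D_int D_centered XE.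
have X_int : P.-integrable setT (EFin \o X).
  apply: eq_integrable measurableT _ _ _ (integrableD measurableT Y_int D_int).
  by move=> x _; rewrite /= XE.
split=> //; split=> //; split=> // A GA; have mA := G_meas A GA.
under [RHS]eq_integral do rewrite XE EFinD.
rewrite integralD //; last 2 first.
- exact: integrableS Y_int.
- exact: integrableS D_int.
by rewrite D_centered // adde0.
Qed.

Section brownian_motion_increments.
Context d (T : measurableType d) (R : realType) (P : probability T R).
Variables (F : R -> set (set T)) (B : R -> T -> R).
Hypotheses (F_filtration : filtration F) (B_brownian : brownian_motion P F B).
Local Open Scope ereal_scope.

Lemma measurable_brownian u : (0 <= u)%R -> measurable_fun setT (B u).
Proof.
move=> u_ge0 _ Y mY; rewrite setTI.
have [_ [F_meas _]] := F_filtration; apply: (F_meas u u_ge0).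
by have [_ [_ [B_adapted _]]] := B_brownian; exact: B_adapted.
Qed.

Lemma integrable_brownian_increment t s : (0 <= t)%R -> (0 <= s)%R ->
  P.-integrable setT (EFin \o (fun w => B (t + s) w - B t w)%R).
Proof.
move=> t_ge0 s_ge0; have [_ [_ [_ [_ B_gauss]]]] := B_brownian.
have [s_gt0|] := ltrP 0 s.
  apply: (@integrable_normal _ _ _ P _ (Num.sqrt s)).
  - by rewrite gt_eqF // sqrtr_gt0.
  - by apply: measurable_funB; apply: measurable_brownian; rewrite ?addr_ge0.
  - exact: B_gauss.
rewrite le_eqVlt ltNge s_ge0 orbF => /eqP ->.
apply: eq_integrable measurableT _ _ _ (finite_measure_integrable_cst P 0 measurableT).
by move=> w _; rewrite /= addr0 subrr.
Qed.

Lemma integrable_brownian u : (0 <= u)%R -> P.-integrable setT (EFin \o B u).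
Proof.
move=> u_ge0; have [B0 _] := B_brownian.
apply: eq_integrable measurableT _ _ _
  (integrable_brownian_increment (lexx 0) u_ge0).
by move=> w _; rewrite /= add0r B0 subr0.
Qed.

Lemma brownian_increment_integral_eq0 t s (A : set T) :
  (0 <= t)%R -> (0 <= s)%R -> F t A ->
  \int[P]_(w in A) (B (t + s) w - B t w)%:E = 0.
Proof.
move=> t_ge0 s_ge0 FA; have [_ [F_meas _]] := F_filtration.
have [_ [_ [_ [B_indep B_gauss]]]] := B_brownian.
have [s_gt0|] := ltrP 0 s.
  apply: (@integral_indep_normal_eq0 _ _ _ P _ (Num.sqrt s)).
  - by rewrite gt_eqF // sqrtr_gt0.
  - exact: F_meas t t_ge0 A FA.
  - by apply: measurable_funB; apply: measurable_brownian; rewrite ?addr_ge0.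
  - exact: B_gauss.
  - by move=> E mE; exact: B_indep.
rewrite le_eqVlt ltNge s_ge0 orbF => /eqP ->.
by under eq_integral do rewrite addr0 subrr; rewrite integral0.
Qed.

End brownian_motion_increments.

Lemma proportional_increment_decomposition (R : fieldType) n
    (c sigma a b b' : 'I_n -> R) (t s : R) : t != 0 ->
  \sum_(k < n) c k * (sigma k * (t + s) * b' k + a k * (t + s)) -
  \sum_(k < n) c k * (sigma k * t * b k + a k * t) =
  s / t * \sum_(k < n) c k * (sigma k * t * b k + a k * t) +
  \sum_(k < n) (t + s) * (c k * sigma k) * (b' k - b k).
Proof.
move=> t0; rewrite mulr_sumr -sumrB -big_split; apply: eq_bigr => k _ /=.
by field.
Qed.

Theorem mainTheorem4 (d : measure_display) (T : measurableType d) (R : realType)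
    (P : probability T R) (F : R -> set (set T)) (n : nat)
    (B : 'I_n -> R -> T -> R) (a sigma c : 'I_n -> R) :
  (0 < n)%N ->
  filtration F ->
  (forall k, brownian_motion P F (B k)) ->
  let Xs := fun k t w => sigma k * t * B k t w + a k * t in
  let S := fun t w => \sum_(k < n) c k * Xs k t w in
  proportional_increments P F S.
Proof.
move=> _ hF hB Xs S t s t_gt0 _ s_ge0.
have [F_sigma [F_meas _]] := hF; have t_ge0 := ltW t_gt0.
have Ft_sigma := F_sigma t t_ge0.
have B_adapted k : measurable_wrt (F t) (B k t).
  by have [_ [_ [B_adapted _]]] := hB k; exact: B_adapted.
have S_int : P.-integrable setT (EFin \o S t).
  apply: integrable_sum_mulr => // k; apply: integrable_affine.
  exact: (integrable_brownian hF (hB k) t_ge0).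
have dB_int k : P.-integrable setT (EFin \o (fun w => B k (t + s) w - B k t w)).
  exact: (integrable_brownian_increment hF (hB k) t_ge0 s_ge0).
apply: (@cond_exp_version_centered _ _ _ _ _ _ _
  (fun w => \sum_(k < n) (t + s) * (c k * sigma k) * (B k (t + s) w - B k t w))).
- exact: F_meas.
- apply/(measurable_wrtP Ft_sigma); apply: measurable_funM => //.
  exact/(measurable_wrtP Ft_sigma)/(measurable_wrt_sum_affine Ft_sigma).
- exact: integrableZl_EFin.
- exact: integrable_sum_mulr.
- move=> A FA; have mA := F_meas t t_ge0 A FA.
  rewrite integral_sum_mulr //; last by move=> k; exact: integrableS (dB_int k).
  by apply: big1 => k _; rewrite (brownian_increment_integral_eq0 hF (hB k)) ?mule0.
- by move=> w; rewrite proportional_increment_decomposition // gt_eqF.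
Qed.
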